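(* Let $p>155$ be a prime, let $G$ be a cyclic group of order $p$, let $g\in G\setminus\{0\}$, and let $S$ be an unsplittable minimal zero-sum sequence over $G$ of length $\frac{p-1}{2}$ which is one of $$g^{\frac{p-11}{2}}\Big(\tfrac{p+3}{2}g\Big)^4\Big(\tfrac{p-1}{2}g\Big)\quad\text{or}\quad g^{\frac{p-7}{2}}\Big(\tfrac{p+5}{2}g\Big)^2\Big(\tfrac{p-3}{2}g\Big).$$ Then $\operatorname{ind}(S)=2$.
   Context: A sequence over $G$ is a finite unordered list of elements of $G$ with repetition allowed, written multiplicatively; $h^r$ denotes $r$ copies of $h$ and $tg$ is the $t$-fold multiple of $g$. $S$ is a minimal zero-sum sequence if its sum is $0$ and no nonempty proper subsequence has sum $0$; it is unsplittable if there do not exist $h\in\operatorname{supp}(S)$ and $y,z\in G$ with $y+z=h$ such that replacing one copy of $h$ in $S$ by the two terms $y,z$ gives again a minimal zero-sum sequence. For $h\in G$ nonzero of order $n$ and $S=(x_1h)\cdots(x_lh)$ with integers $1\le x_i\le n$, the $h$-norm is $\|S\|_h=(x_1+\dots+x_l)/n$. If $\langle\operatorname{supp}(S)\rangle$ is a nontrivial finite cyclic group, $\operatorname{ind}(S)=\min\{\|S\|_h: h\in G,\ \langle\operatorname{supp}(S)\rangle=\langle h\rangle\}$. *)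

(* Sequences over an additive abelian group G (a zmodType)
   are represented by [seq G]; being "unordered" is handled by always
   quantifying over sub-multisets via masks and by stating the shape of S up
   to permutation ([perm_eq]). *)
From HB Require Import structures.
From mathcomp Require Import all_boot all_order all_algebra.
Set Implicit Arguments.
Unset Strict Implicit.
Unset Printing Implicit Defensive.
Import Order.TTheory GRing.Theory Num.Theory.
Local Open Scope ring_scope.

Section Defs.
Variable G : zmodType.

Definition seqsum (S : seq G) : G := \sum_(x <- S) x.

Definition min_zero_sum (S : seq G) : Prop :=
  seqsum S = 0 /\
  forall m : bitseq, let T := mask m S in
    T != [::] -> (size T < size S)%N -> seqsum T <> 0.

Definition unsplittable (S : seq G) : Prop :=
  ~ (exists h y z, h \in S /\ y + z = h /\
       min_zero_sum (y :: z :: rem h S)).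

Definition in_span (S : seq G) (x : G) : Prop :=
  exists c : seq int, x = \sum_(i < size S) S`_i *~ c`_i.

Definition generates (S : seq G) (h : G) : Prop :=
  forall x, in_span S x <-> exists k : int, x = h *~ k.

Definition order_of (h : G) (n : nat) : Prop :=
  (0 < n)%N /\ h *+ n = 0 /\ forall m, (0 < m < n)%N -> h *+ m <> 0.

Definition hnorm (h : G) (S : seq G) (q : rat) : Prop :=
  exists (n : nat) (xs : seq nat),
    order_of h n /\ size xs = size S /\
    (forall i, (i < size S)%N ->
        (1 <= nth 0%N xs i <= n)%N /\ S`_i = h *+ nth 0%N xs i) /\
    q = (sumn xs)%:R / n%:R.

Definition ind_is (S : seq G) (q : rat) : Prop :=
  (exists h, generates S h /\ hnorm h S q) /\
  (forall h q', generates S h -> hnorm h S q' -> q <= q').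

End Defs.

(* Put h := ((p+1)/2) g, so that g = 2h.  In terms of h both sequences have
   the shape (2h)^a (uh)^b (vh) with 2 < u < p and 2a + bu + v = 2p, so
   ||S||_h = 2.  Conversely, for every generator h the coefficients of S sum
   to a positive multiple of ord(h), so ||S||_h is a positive integer; and if
   it were 1, an element xh of S with x >= 2 (there is one, as S has two
   distinct terms) could be split into h and (x-1)h, leaving coefficients
   that still sum to ord(h), i.e. a minimal zero-sum sequence: S would not be
   unsplittable. *)
From HB Require Import structures.
From mathcomp Require Import all_boot all_order fingroup cyclic all_algebra zify.
Import Order.TTheory GRing.Theory Num.Theory.
Local Open Scope ring_scope.

Set Implicit Arguments.
Unset Strict Implicit.

Lemma perm_map_preimage (T U : eqType) (f : T -> U) (x0 : T) s t :
  perm_eq s (map f t) -> exists2 t', perm_eq t' t & s = map f t'.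
Proof.
case/(perm_iotaP (f x0)) => Is; rewrite size_map => Is_iota ->.
exists (map (nth x0 t) Is).
  by rewrite -{2}(mkseq_nth x0 t) perm_map.
rewrite -map_comp; apply/eq_in_map => i; rewrite (perm_mem Is_iota) mem_iota.
by move=> /= i_lt; rewrite (nth_map x0).
Qed.

Lemma sumn_gt0 (s : seq nat) :
  all (fun x => 0 < x)%N s -> s != [::] -> (0 < sumn s)%N.
Proof. by case: s => //= x s /andP[x_gt0 _] _; rewrite addn_gt0 x_gt0. Qed.

Lemma leq_sumn_mask (m : bitseq) (s : seq nat) : (sumn (mask m s) <= sumn s)%N.
Proof.
elim: s m => [|x s IH] [|[] m] //=; first by rewrite leq_add2l.
exact: leq_trans (IH m) (leq_addl _ _).
Qed.

Lemma sumn_mask_lt (m : bitseq) (s : seq nat) :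
  all (fun x => 0 < x)%N s -> (size (mask m s) < size s)%N ->
  (sumn (mask m s) < sumn s)%N.
Proof.
elim: s m => [|x s IH] [|[] m] //= /andP[x_gt0 s_pos].
- by move=> _; rewrite addn_gt0 x_gt0.
- by rewrite ltnS ltn_add2l => /(IH m s_pos).
- by move=> _; rewrite -addn1 addnC leq_add // leq_sumn_mask.
Qed.

Section Order.
Variable G : zmodType.
Implicit Types (h : G) (n : nat).

Lemma mulrn_period h n k m : h *+ n = 0 -> h *+ (n * k + m) = h *+ m.
Proof. by move=> hn; rewrite mulrnDr mulrnA hn mul0rn add0r. Qed.

Lemma order_of_dvdn h n m : order_of h n -> h *+ m = 0 -> (n %| m)%N.
Proof.
move=> [n_gt0 [hn h_min]] hm; have [r0|r_gt0] := posnP (m %% n); first by rewrite /dvdn r0.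
exfalso; apply: (h_min (m %% n)%N); first by rewrite r_gt0 ltn_pmod.
by rewrite -hm {2}(divn_eq m n) mulnC mulrn_period.
Qed.

Lemma order_of_inj h n i j :
  order_of h n -> (i < n)%N -> (j < n)%N -> h *+ i = h *+ j -> i = j.
Proof.
move=> ho; wlog le_ij : i j / (i <= j)%N.
  move=> W; case: (leqP i j) => [|/ltnW le_ji]; first exact: W.
  by move=> i_lt j_lt /esym/(W j i le_ji j_lt i_lt).
move=> _ j_lt eq_ij; have : (n %| j - i)%N.
  apply: (order_of_dvdn ho); apply: (addIr (h *+ i)).
  by rewrite -mulrnDr subnK // add0r eq_ij.
have [ji0|ji_gt0] := posnP (j - i); first lia.
by move/(dvdn_leq ji_gt0); lia.
Qed.

Lemma seqsum_mulrn h (xs : seq nat) :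
  seqsum [seq h *+ x | x <- xs] = h *+ sumn xs.
Proof.
by rewrite /seqsum big_map; elim: xs => [|x xs IH]; rewrite ?big_nil ?big_cons //= IH mulrnDr.
Qed.

Lemma min_zero_sum_mulrn h n xs :
  order_of h n -> all (fun x => 0 < x)%N xs -> sumn xs = n ->
  min_zero_sum [seq h *+ x | x <- xs].
Proof.
move=> [_ [hn h_min]] xs_pos sum_xs.
split=> [|m /=]; first by rewrite seqsum_mulrn sum_xs.
rewrite -map_mask !size_map seqsum_mulrn => mask_neq0 mask_lt.
have mask_pos : all (fun x => 0 < x)%N (mask m xs).
  by apply/allP => x /mem_mask /(allP xs_pos).
have mask_neq : mask m xs != [::] by apply: contraNneq mask_neq0 => ->.
by apply: h_min; rewrite -sum_xs sumn_gt0 ?sumn_mask_lt.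
Qed.

Lemma hnorm_coeffs h (S : seq G) q :
  hnorm h S q -> exists n xs,
    [/\ order_of h n, all (fun x => 0 < x <= n)%N xs,
        S = [seq h *+ x | x <- xs] & q = (sumn xs)%:R / n%:R].
Proof.
case=> n [xs [ho [size_xs [S_xs ->]]]]; exists n, xs; split=> //.
  by apply/(all_nthP 0%N) => i; rewrite size_xs => /S_xs[].
apply: (@eq_from_nth _ 0); first by rewrite size_map size_xs.
by move=> i i_lt; rewrite (nth_map 0%N) ?size_xs //; case: (S_xs i i_lt).
Qed.

Lemma hnorm_mulrn h n xs :
  order_of h n -> all (fun x => 0 < x <= n)%N xs ->
  hnorm h [seq h *+ x | x <- xs] ((sumn xs)%:R / n%:R).
Proof.
move=> ho xs_range; exists n, xs; split=> //; split; first by rewrite size_map.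
split=> // i; rewrite size_map => i_lt; rewrite (nth_map 0%N) //.
by split=> //; apply: (all_nthP 0%N xs_range).
Qed.

Lemma norm1_not_unsplittable h n xs c :
  order_of h n -> all (fun x => 0 < x)%N xs -> sumn xs = n ->
  c \in [seq h *+ x | x <- xs] -> c != h ->
  ~ unsplittable [seq h *+ x | x <- xs].
Proof.
set f := fun x => h *+ x => ho xs_pos sum_xs cS c_neq_h; apply.
set j := index c (map f xs); set x := nth 0%N xs j.
have j_lt : (j < size xs)%N by rewrite -(size_map f) index_mem.
have c_def : c = f x by rewrite -(nth_map _ 0) // nth_index.
have x_gt0 : (0 < x)%N by apply: (all_nthP 0%N xs_pos).
have x_neq1 : x != 1%N by apply: contraNneq c_neq_h => x1; rewrite c_def x1 /f mulr1n.
have x_ge2 : (2 <= x)%N by lia.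
exists c, h, (h *+ (x - 1)); split=> //; split.
  by rewrite c_def /f -mulrS subn1 prednK // ltnW.
have -> : h :: h *+ (x - 1) :: rem c (map f xs)
          = map f (1%N :: (x - 1)%N :: (take j xs ++ drop j.+1 xs)).
  by rewrite remE -/j /= map_cat map_take map_drop /f mulr1n.
apply: (min_zero_sum_mulrn ho).
  rewrite /= all_cat subn_gt0 x_ge2 /=.
  by apply/andP; split; apply/allP => y; [move/mem_take | move/mem_drop];
    apply: (allP xs_pos).
rewrite -sum_xs -{3}(cat_take_drop j xs) (drop_nth 0%N j_lt) /= !sumn_cat /=.
rewrite -/x; lia.
Qed.

Lemma hnorm_ge2 (S : seq G) h q a b :
  seqsum S = 0 -> unsplittable S -> a \in S -> b \in S -> a != b ->
  hnorm h S q -> 2 <= q.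
Proof.
move=> S0 uns aS bS a_neq_b /hnorm_coeffs[n [xs [ho xs_range S_def ->]]].
subst S; have xs_pos : all (fun x => 0 < x)%N xs.
  by apply: sub_all xs_range => x /andP[].
have /dvdnP[k sum_xs] : (n %| sumn xs)%N.
  by apply: (order_of_dvdn ho); rewrite -seqsum_mulrn.
have n_gt0 : (0 < n)%N := ho.1.
have k_gt0 : (0 < k)%N.
  have : (0 < sumn xs)%N by apply: sumn_gt0 => //; case: (xs) aS.
  by rewrite sum_xs muln_gt0 => /andP[].
rewrite sum_xs natrM mulfK ?pnatr_eq0 -?lt0n // ler_nat.
case: (ltnP 1 k) => // k_le1; exfalso.
have sum_n : sumn xs = n by rewrite sum_xs (_ : k = 1%N) ?mul1n //; lia.
have [c cS c_neq_h] : exists2 c, c \in [seq h *+ x | x <- xs] & c != h.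
  by case: (eqVneq a h) => [a_h|]; [exists b; rewrite // -a_h eq_sym | exists a].
exact: norm1_not_unsplittable ho xs_pos sum_n cS c_neq_h uns.
Qed.

Lemma in_span_mulrn (S : seq G) y j : y \in S -> in_span S (y *+ j).
Proof.
move=> yS; have i_lt : (index y S < size S)%N by rewrite index_mem.
exists (mkseq (fun i => if i == index y S then j%:Z else 0) (size S)).
rewrite (bigD1 (Ordinal i_lt)) //= nth_mkseq // eqxx nth_index // big1.
  by rewrite addr0 pmulrn.
move=> i /eqP i_neq; rewrite nth_mkseq //; case: eqP => [i_eq|_].
  by exfalso; apply: i_neq; apply: val_inj.
by rewrite mulr0z.
Qed.

End Order.

Section PrimeOrder.
Variables (G : finZmodType) (p : nat).
Hypotheses (p_prime : prime p) (card_G : #|G| = p).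

Lemma mulrn_eq0_prime (x : G) m : x != 0 -> (x *+ m == 0) = (p %| m)%N.
Proof.
move=> x_neq0; rewrite (_ : (x *+ m == 0) = (x ^+ m == 1)%g) // -order_dvdn.
have : (#[x]%g %| p)%N by rewrite -card_G -cardsT order_dvdG ?in_setT.
case/primeP: p_prime => _ p_div /p_div /orP[|/eqP -> //].
by rewrite order_eq1 (negPf x_neq0).
Qed.

Lemma order_of_card_prime (h : G) : h != 0 -> order_of h p.
Proof.
move=> h_neq0; split; first exact: prime_gt0.
split; first by apply/eqP; rewrite mulrn_eq0_prime.
move=> m /andP[m_gt0 m_lt]; apply/eqP; rewrite mulrn_eq0_prime //.
by apply/negP => /(dvdn_leq m_gt0); rewrite leqNgt m_lt.
Qed.

Lemma mulrn_surj_prime (h x : G) : h != 0 -> exists j, x = h *+ j.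
Proof.
move=> /order_of_card_prime ho; pose f (i : 'I_p) := h *+ i.
have f_inj : injective f.
  by move=> i j /(order_of_inj ho (ltn_ord i) (ltn_ord j)) /val_inj.
have := inj_card_onto f_inj; rewrite card_ord card_G leqnn.
by move=> /(_ isT x) /codomP[i ->]; exists i.
Qed.

Lemma generates_prime (S : seq G) h y :
  h != 0 -> y \in S -> y != 0 -> generates S h.
Proof.
move=> h_neq0 yS y_neq0 x; split=> _.
  by have [j ->] := mulrn_surj_prime x h_neq0; exists j%:Z; rewrite pmulrn.
by have [j ->] := mulrn_surj_prime x y_neq0; apply: in_span_mulrn.
Qed.

Lemma ind_is_2 (S : seq G) h xs a b :
  h != 0 -> all (fun x => 0 < x <= p)%N xs -> sumn xs = (2 * p)%N ->
  perm_eq S [seq h *+ x | x <- xs] -> unsplittable S ->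
  a \in S -> b \in S -> a != b -> ind_is S 2.
Proof.
move=> h_neq0 xs_range sum_xs pS uns aS bS a_neq_b.
have ho := order_of_card_prime h_neq0.
have [xs' xs'_xs S_def] := perm_map_preimage 0%N pS; subst S.
have [y yS y_neq0] : exists2 y, y \in [seq h *+ x | x <- xs'] & y != 0.
  by case: (eqVneq a 0) => [a0|]; [exists b; rewrite // -a0 eq_sym | exists a].
split.
  exists h; split; first exact: generates_prime yS y_neq0.
  have := hnorm_mulrn ho (etrans (perm_all _ xs'_xs) xs_range).
  by rewrite (perm_sumn xs'_xs) sum_xs natrM mulfK // pnatr_eq0 -lt0n prime_gt0.
move=> h' q' _; apply: hnorm_ge2 uns aS bS a_neq_b.
by rewrite seqsum_mulrn (perm_sumn xs'_xs) sum_xs mulnC mulrnA ho.2.1 mul0rn.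
Qed.

Lemma ind_is_2_of_shape (S : seq G) h a b u v :
  h != 0 -> perm_eq S (nseq a (h *+ 2) ++ nseq b (h *+ u) ++ [:: h *+ v]) ->
  unsplittable S -> (0 < a)%N -> (0 < b)%N -> (2 < u < p)%N ->
  (0 < v <= p)%N -> (2 * a + b * u + v = 2 * p)%N -> ind_is S 2.
Proof.
set xs := nseq a 2%N ++ nseq b u ++ [:: v].
have -> : nseq a (h *+ 2) ++ nseq b (h *+ u) ++ [:: h *+ v] = [seq h *+ x | x <- xs].
  by rewrite !map_cat !map_nseq.
move=> h_neq0 pS uns a_gt0 b_gt0 /andP[u_gt2 u_lt] v_range sum_abv.
have mem_S x : x \in xs -> h *+ x \in S by move=> ?; rewrite (perm_mem pS) map_f.
apply: (ind_is_2 h_neq0 _ _ pS uns (mem_S 2%N _) (mem_S u _)).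
- by rewrite !all_cat !all_nseq /= v_range; lia.
- by rewrite !sumn_cat !sumn_nseq /=; lia.
- by rewrite !mem_cat !mem_nseq eqxx a_gt0.
- by rewrite !mem_cat !mem_nseq eqxx b_gt0 orbT.
- by apply/eqP => /(order_of_inj (order_of_card_prime h_neq0)); lia.
Qed.

End PrimeOrder.

Unset Implicit Arguments.

Theorem lemma3p6 (p : nat) (G : finZmodType) (g : G) (S : seq G) :
  prime p -> (155 < p)%N ->
  #|G| = p ->
  (exists h : G, forall x : G, exists k : nat, x = h *+ k) ->
  g != 0 ->
  min_zero_sum S -> unsplittable S ->
  size S = p.-1./2 ->
  (perm_eq S (nseq ((p - 11)./2) g ++ nseq 4 (g *+ (p + 3)./2)
               ++ [:: g *+ (p - 1)./2])
   \/ perm_eq S (nseq ((p - 7)./2) g ++ nseq 2 (g *+ (p + 5)./2)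
               ++ [:: g *+ (p - 3)./2])) ->
  ind_is S 2.
Proof.
(* Cyclicity of G follows from #|G| = p and the vanishing of the sum of S
   from its shape. *)
move=> p_prime p_gt155 card_G _ g_neq0 _ uns _ shapes.
have p_odd : odd p by case: (even_prime p_prime) => // p2; rewrite p2 in p_gt155.
have p_halves := odd_double_half p; rewrite p_odd /= in p_halves.
have gp : g *+ p = 0 := (order_of_card_prime p_prime card_G g_neq0).2.1.
set h := g *+ (p./2).+1.
have g_def : g = h *+ 2 by rewrite -mulrnA (_ : _ * 2 = p * 1 + 1)%N ?mulrn_period //; lia.
have h_neq0 : h != 0 by apply: contraNneq g_neq0 => h0; rewrite g_def h0 mul0rn.
have hp : h *+ p = 0 := (order_of_card_prime p_prime card_G h_neq0).2.1.
have reduce k t m : (2 * k = p * t + m)%N -> g *+ k = h *+ m.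
  by move=> km; rewrite g_def -mulrnA km mulrn_period.
case: shapes => pS.
- have e1 : g *+ (p + 3)./2 = h *+ 3%N by apply: (reduce _ 1%N); lia.
  have e2 : g *+ (p - 1)./2 = h *+ (p - 1) by apply: (reduce _ 0%N); lia.
  rewrite e1 e2 g_def in pS.
  by apply: (ind_is_2_of_shape p_prime card_G h_neq0 pS uns); lia.
- have e1 : g *+ (p + 5)./2 = h *+ 5%N by apply: (reduce _ 1%N); lia.
  have e2 : g *+ (p - 3)./2 = h *+ (p - 3) by apply: (reduce _ 0%N); lia.
  rewrite e1 e2 g_def in pS.
  by apply: (ind_is_2_of_shape p_prime card_G h_neq0 pS uns); lia.
Qed.
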